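(* Let $n\ge1$. There is a $\Pi^0_n$ equivalence relation on $\mathbb{N}^\mathbb{N}$, all of whose classes are countably infinite, which is not $\Sigma^0_n$-graphable.
   Context: $E$ is $\Gamma$-graphable if there is a simple undirected graph $G$ in $\Gamma$ whose connectedness relation (connected by a finite path) equals $E$. Pointclasses are lightface. *)

From Stdlib Require Import Arith List Relations.
Import ListNotations.

Inductive recf : Type :=
| RZero : recf
| RSucc : recf
| RProj : nat -> recf
| RComp : recf -> list recf -> recf
| RPrec : recf -> recf -> recf
| RMu   : recf -> recf.

(* Big-step semantics: [eval f v y] means f halts on arguments v with output y.
   Missing arguments default to 0. *)
Inductive eval : recf -> list nat -> nat -> Prop :=
| eZero v : eval RZero v 0
| eSucc v : eval RSucc v (S (hd 0 v))
| eProj i v : eval (RProj i) v (nth i v 0)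
| eComp f gs v ws y : evals gs v ws -> eval f ws y -> eval (RComp f gs) v y
| ePrec0 f g v y : eval f v y -> eval (RPrec f g) (0 :: v) y
| ePrecS f g n v r y :
    eval (RPrec f g) (n :: v) r -> eval g (n :: r :: v) y ->
    eval (RPrec f g) (S n :: v) y
| eMu f v n :
    eval f (n :: v) 0 ->
    (forall m, m < n -> exists k, eval f (m :: v) (S k)) ->
    eval (RMu f) v n
with evals : list recf -> list nat -> list nat -> Prop :=
| evNil v : evals [] v []
| evCons g gs v y ys : eval g v y -> evals gs v ys -> evals (g :: gs) v (y :: ys).

Definition computable (P : nat -> bool) : Prop :=
  exists f : recf, forall k, eval f [k] (if P k then 1 else 0).

Definition cpair (a b : nat) : nat := (a + b) * (a + b + 1) / 2 + b.
Fixpoint code (s : list nat) : nat :=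
  match s with [] => 0 | a :: s' => S (cpair a (code s')) end.

Definition baire := nat -> nat.
Definition prefix (x : baire) (m : nat) : list nat := map x (seq 0 m).

Definition ncons (m : nat) (x : baire) : baire :=
  fun i => match i with 0 => m | S j => x j end.

(** [Sig k A] : A is lightface Sigma^0_(k+1). *)
Fixpoint Sig (k : nat) (A : baire -> Prop) : Prop :=
  match k with
  | 0 => exists P : nat -> bool, computable P /\
           forall x, A x <-> exists m, P (code (prefix x m)) = true
  | S k' => exists B : baire -> Prop,
           Sig k' (fun z => ~ B z) /\
           forall x, A x <-> exists m, B (ncons m x)
  end.

(** Lightface Sigma^0_n and Pi^0_n subsets of N^N, for n >= 1
    (the n = 0 case is irrelevant here and set to False). *)
Definition Sigma0 (n : nat) (A : baire -> Prop) : Prop :=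
  match n with 0 => False | S k => Sig k A end.
Definition Pi0 (n : nat) (A : baire -> Prop) : Prop :=
  Sigma0 n (fun x => ~ A x).

(** Relations on N^N, via the computable homeomorphism N^N x N^N ~ N^N
    (interleaving). *)
Definition evens (z : baire) : baire := fun i => z (2 * i).
Definition odds (z : baire) : baire := fun i => z (2 * i + 1).
Definition Sigma0_rel (n : nat) (R : baire -> baire -> Prop) : Prop :=
  Sigma0 n (fun z => R (evens z) (odds z)).
Definition Pi0_rel (n : nat) (R : baire -> baire -> Prop) : Prop :=
  Pi0 n (fun z => R (evens z) (odds z)).

Definition simple_graph (G : baire -> baire -> Prop) : Prop :=
  (forall x y, G x y -> G y x) /\ (forall x, ~ G x x).

Definition Sigma0_graphable (n : nat) (E : baire -> baire -> Prop) : Prop :=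
  exists G : baire -> baire -> Prop,
    Sigma0_rel n G /\ simple_graph G /\
    forall x y, E x y <-> clos_refl_trans baire G x y.

Definition countably_infinite (A : baire -> Prop) : Prop :=
  exists f : nat -> baire,
    (forall i j, f i = f j -> i = j) /\ (forall y, A y <-> exists k, f k = y).

(* Let [univ K] be a lightface universal Sigma^0_(K+1) set and [diag K] the
   diagonal {x | ~ univ K (evens x) x}: it is lightface Pi^0_(K+1) but not even
   boldface Sigma^0_(K+1).  Relate z and w when they have the same tail x and
   either x is in [diag K] or their heads have the same parity.  Over a tail
   in the diagonal this gives one class {m.x | m}, otherwise the two classes of
   even and odd heads, so all classes are countably infinite, and the relation
   is Pi^0_(K+1) because Sigma^0_1 is closed under the needed Boolean operations
   and substitutions (realized by explicit mu-recursive programs).  If a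
   Sigma^0_(K+1) graph G generated it, then x is in [diag K] iff some edge of G
   joins an even-headed and an odd-headed point over x, since a path from 0.x
   to 1.x must change parity; this exhibits [diag K] as a countable union of
   continuous preimages of G, hence boldface Sigma^0_(K+1): a contradiction. *)

From Stdlib Require Import Arith List Relations Lia Bool.
From Stdlib Require Import Classical FunctionalExtensionality ClassicalEpsilon.
Import ListNotations.

(** * Total mu-recursive functions *)

Definition computes (f : recf) (F : list nat -> nat) : Prop := forall v, eval f v (F v).

(* Combinators are built with [r_with], so that [sem] of a combinator reduces
   by [cbn] to its intended meaning. *)
Record rfun := { prog : recf; sem : list nat -> nat; prog_computes : computes prog sem }.

Fixpoint prim_rec (F G : list nat -> nat) (n : nat) (w : list nat) : nat :=
  match n with 0 => F w | S m => G (m :: prim_rec F G m w :: w) end.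

Lemma eval_RPrec f g F G : computes f F -> computes g G ->
  forall n w, eval (RPrec f g) (n :: w) (prim_rec F G n w).
Proof.
  intros Hf Hg n w; induction n as [|n IH]; simpl.
  - apply ePrec0, Hf.
  - eapply ePrecS; [exact IH | apply Hg].
Qed.

Lemma evals_map_prog (us : list rfun) v : evals (map prog us) v (map (fun u => sem u v) us).
Proof. induction us; simpl; constructor; [apply prog_computes | assumption]. Qed.

Definition r_arg (i : nat) : rfun := Build_rfun (RProj i) (fun v => nth i v 0) (eProj i).
Definition r_zero : rfun := Build_rfun RZero (fun _ => 0) eZero.
Definition r_succ : rfun := Build_rfun RSucc (fun v => S (hd 0 v)) eSucc.

Lemma comp_computes (u : rfun) (us : list rfun) :
  computes (RComp (prog u) (map prog us)) (fun v => sem u (map (fun a => sem a v) us)).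
Proof. intro v. eapply eComp; [apply evals_map_prog | apply prog_computes]. Qed.
Definition r_comp (u : rfun) (us : list rfun) : rfun := Build_rfun _ _ (comp_computes u us).

Lemma computes_ext (u : rfun) (F : list nat -> nat) :
  (forall v, sem u v = F v) -> computes (prog u) F.
Proof. intros H v. rewrite <- H. apply prog_computes. Qed.
Definition r_with (u : rfun) (F : list nat -> nat) (H : forall v, sem u v = F v) : rfun :=
  Build_rfun _ _ (computes_ext u F H).

(* [r_rec] only passes on the first six arguments: inside [step] the counter is
   argument 0, the accumulator argument 1 and the original arguments start at 2. *)
Definition env6 (v : list nat) : list nat := map (fun i => nth i v 0) (seq 0 6).

Lemma rec_computes (init step count : rfun) :
  computes (RComp (RPrec (prog init) (prog step)) (prog count :: map RProj (seq 0 6)))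
    (fun v => prim_rec (sem init) (sem step) (sem count v) (env6 v)).
Proof.
  intro v. eapply eComp.
  - constructor; [apply prog_computes | simpl; repeat constructor].
  - apply eval_RPrec; apply prog_computes.
Qed.
Definition r_rec (init step count : rfun) : rfun := Build_rfun _ _ (rec_computes init step count).

Definition r_S (a : rfun) : rfun :=
  r_with (r_comp r_succ [a]) (fun v => S (sem a v)) (fun v => eq_refl).

Fixpoint r_nat (k : nat) : rfun := match k with 0 => r_zero | S k => r_S (r_nat k) end.
Lemma sem_r_nat k v : sem (r_nat k) v = k.
Proof. induction k; simpl; auto. Qed.
Definition r_const (k : nat) : rfun := r_with (r_nat k) (fun _ => k) (sem_r_nat k).

Lemma add_rspec v : sem (r_rec (r_arg 1) (r_S (r_arg 1)) (r_arg 0)) v = nth 0 v 0 + nth 1 v 0.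
Proof. simpl. induction (nth 0 v 0); simpl; auto. Qed.
Definition r_add (a b : rfun) : rfun :=
  r_with (r_comp (r_rec (r_arg 1) (r_S (r_arg 1)) (r_arg 0)) [a; b])
    (fun v => sem a v + sem b v) (fun v => add_rspec _).

Lemma mul_rspec v :
  sem (r_rec (r_const 0) (r_add (r_arg 1) (r_arg 3)) (r_arg 0)) v = nth 0 v 0 * nth 1 v 0.
Proof. simpl. induction (nth 0 v 0); simpl; lia. Qed.
Definition r_mul (a b : rfun) : rfun :=
  r_with (r_comp (r_rec (r_const 0) (r_add (r_arg 1) (r_arg 3)) (r_arg 0)) [a; b])
    (fun v => sem a v * sem b v) (fun v => mul_rspec _).

Lemma pred_rspec v : sem (r_rec (r_const 0) (r_arg 0) (r_arg 0)) v = pred (nth 0 v 0).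
Proof. simpl. destruct (nth 0 v 0); reflexivity. Qed.
Definition r_pred (a : rfun) : rfun :=
  r_with (r_comp (r_rec (r_const 0) (r_arg 0) (r_arg 0)) [a])
    (fun v => pred (sem a v)) (fun v => pred_rspec _).

Lemma sub_rspec v : sem (r_rec (r_arg 0) (r_pred (r_arg 1)) (r_arg 1)) v = nth 0 v 0 - nth 1 v 0.
Proof. simpl. induction (nth 1 v 0) as [|n IH]; simpl; rewrite ?IH; lia. Qed.
Definition r_sub (a b : rfun) : rfun :=
  r_with (r_comp (r_rec (r_arg 0) (r_pred (r_arg 1)) (r_arg 1)) [a; b])
    (fun v => sem a v - sem b v) (fun v => sub_rspec _).

Definition nz (n : nat) : bool := negb (n =? 0).
Lemma nz_b2n b : nz (Nat.b2n b) = b.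
Proof. now destruct b. Qed.

Lemma not_rspec a v : sem (r_sub (r_const 1) a) v = Nat.b2n (negb (nz (sem a v))).
Proof. simpl. unfold nz. now destruct (sem a v). Qed.
Definition r_not (a : rfun) : rfun := r_with _ _ (not_rspec a).
Definition r_nz (a : rfun) : rfun :=
  r_with (r_not (r_not a)) (fun v => Nat.b2n (nz (sem a v)))
    (fun v => f_equal Nat.b2n (eq_trans (f_equal negb (nz_b2n _)) (negb_involutive _))).

Lemma or_rspec a b v : sem (r_nz (r_add a b)) v = Nat.b2n (nz (sem a v) || nz (sem b v)).
Proof. simpl. unfold nz. now destruct (sem a v), (sem b v). Qed.
Definition r_or (a b : rfun) : rfun := r_with _ _ (or_rspec a b).

Lemma and_rspec a b v : sem (r_nz (r_mul a b)) v = Nat.b2n (nz (sem a v) && nz (sem b v)).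
Proof.
  simpl. unfold nz. destruct (sem a v), (sem b v); simpl; rewrite ?Nat.mul_0_r; reflexivity.
Qed.
Definition r_and (a b : rfun) : rfun := r_with _ _ (and_rspec a b).

Lemma leb_rspec a b v : sem (r_not (r_sub a b)) v = Nat.b2n (sem a v <=? sem b v).
Proof.
  simpl. f_equal. unfold nz. rewrite negb_involutive.
  destruct (Nat.leb_spec (sem a v) (sem b v)); [apply Nat.eqb_eq | apply Nat.eqb_neq]; lia.
Qed.
Definition r_leb (a b : rfun) : rfun := r_with _ _ (leb_rspec a b).

Lemma eqb_rspec a b v : sem (r_and (r_leb a b) (r_leb b a)) v = Nat.b2n (sem a v =? sem b v).
Proof.
  simpl. rewrite !nz_b2n. f_equal.
  destruct (Nat.leb_spec (sem a v) (sem b v)), (Nat.leb_spec (sem b v) (sem a v)),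
    (Nat.eqb_spec (sem a v) (sem b v)); simpl; auto; lia.
Qed.
Definition r_eqb (a b : rfun) : rfun := r_with _ _ (eqb_rspec a b).

Lemma if_rspec c a b v :
  sem (r_add (r_mul (r_nz c) a) (r_mul (r_not c) b)) v = if nz (sem c v) then sem a v else sem b v.
Proof. simpl. destruct (nz (sem c v)); simpl; lia. Qed.
Definition r_if (c a b : rfun) : rfun := r_with _ _ (if_rspec c a b).

Lemma odd_rspec v :
  sem (r_rec (r_const 0) (r_not (r_arg 1)) (r_arg 0)) v = Nat.b2n (Nat.odd (nth 0 v 0)).
Proof.
  simpl. induction (nth 0 v 0) as [|n IH]; [reflexivity|].
  simpl. rewrite IH, nz_b2n, Nat.odd_succ, <- Nat.negb_odd. reflexivity.
Qed.
Definition r_odd (a : rfun) : rfun :=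
  r_with (r_comp (r_rec (r_const 0) (r_not (r_arg 1)) (r_arg 0)) [a])
    (fun v => Nat.b2n (Nat.odd (sem a v))) (fun v => odd_rspec _).

Ltac sem_simpl :=
  cbn [sem r_with r_comp r_arg r_zero r_succ r_S r_const r_add r_mul r_pred r_sub
       r_not r_nz r_or r_and r_leb r_eqb r_if r_odd map nth hd].

(** * Codes of pairs and finite sequences *)

Fixpoint tri (n : nat) : nat := match n with 0 => 0 | S m => tri m + S m end.

Lemma tri_rspec v :
  sem (r_rec (r_const 0) (r_add (r_arg 1) (r_S (r_arg 0))) (r_arg 0)) v = tri (nth 0 v 0).
Proof. simpl. induction (nth 0 v 0); simpl; auto. Qed.
Definition r_tri (a : rfun) : rfun :=
  r_with (r_comp (r_rec (r_const 0) (r_add (r_arg 1) (r_S (r_arg 0))) (r_arg 0)) [a])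
    (fun v => tri (sem a v)) (fun v => tri_rspec _).

Lemma cpair_tri a b : cpair a b = tri (a + b) + b.
Proof.
  unfold cpair. enough (H : forall n, n * (n + 1) = tri n * 2) by (rewrite H, Nat.div_mul; lia).
  induction n as [|n IH]; simpl tri; nia.
Qed.

Lemma tri_le_mono a b : a <= b -> tri a <= tri b.
Proof. induction 1; simpl; lia. Qed.

Fixpoint tri_root (c : nat) : nat :=
  match c with
  | 0 => 0
  | S c' => let r := tri_root c' in if tri (S r) <=? S c' then S r else r
  end.

Lemma tri_root_spec c : tri (tri_root c) <= c < tri (S (tri_root c)).
Proof.
  induction c as [|c IH]; [simpl; lia|]. cbn [tri_root].
  destruct (Nat.leb_spec (tri (S (tri_root c))) (S c)); simpl in *; lia.
Qed.

Lemma tri_root_unique c w : tri w <= c < tri (S w) -> tri_root c = w.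
Proof.
  intros H. pose proof (tri_root_spec c).
  destruct (Nat.lt_trichotomy (tri_root c) w) as [h|[h|h]]; auto;
    apply tri_le_mono in h; simpl in *; lia.
Qed.

Definition unpair2 (c : nat) : nat := c - tri (tri_root c).
Definition unpair1 (c : nat) : nat := tri_root c - unpair2 c.

Lemma tri_root_cpair a b : tri_root (cpair a b) = a + b.
Proof. rewrite cpair_tri. apply tri_root_unique. simpl. lia. Qed.
Lemma unpair2_cpair a b : unpair2 (cpair a b) = b.
Proof. unfold unpair2. rewrite tri_root_cpair, cpair_tri. lia. Qed.
Lemma unpair1_cpair a b : unpair1 (cpair a b) = a.
Proof. unfold unpair1. rewrite tri_root_cpair, unpair2_cpair. lia. Qed.

Definition r_tri_root_step : rfun :=
  r_add (r_arg 1) (r_leb (r_tri (r_S (r_arg 1))) (r_S (r_arg 0))).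
Lemma tri_root_rspec v :
  sem (r_rec (r_const 0) r_tri_root_step (r_arg 0)) v = tri_root (nth 0 v 0).
Proof.
  simpl. induction (nth 0 v 0) as [|n IH]; [reflexivity|]. simpl. rewrite IH.
  destruct (_ <=? S n); simpl; lia.
Qed.
Definition r_tri_root (a : rfun) : rfun :=
  r_with (r_comp (r_rec (r_const 0) r_tri_root_step (r_arg 0)) [a])
    (fun v => tri_root (sem a v)) (fun v => tri_root_rspec _).
Definition r_unpair2 (a : rfun) : rfun :=
  r_with (r_sub a (r_tri (r_tri_root a))) (fun v => unpair2 (sem a v)) (fun v => eq_refl).
Definition r_unpair1 (a : rfun) : rfun :=
  r_with (r_sub (r_tri_root a) (r_unpair2 a)) (fun v => unpair1 (sem a v)) (fun v => eq_refl).
Definition r_cpair (a b : rfun) : rfun :=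
  r_with (r_add (r_tri (r_add a b)) b) (fun v => cpair (sem a v) (sem b v))
    (fun v => eq_sym (cpair_tri _ _)).

Definition code_hd (c : nat) : nat := unpair1 (pred c).
Definition code_tl (c : nat) : nat := unpair2 (pred c).
Definition code_drop (c p : nat) : nat := Nat.iter p code_tl c.
Definition code_nth (c p : nat) : nat := code_hd (code_drop c p).
Definition code_has_len (c M : nat) : bool := (M =? 0) || nz (code_drop c (pred M)).

Lemma code_hd_cons a s : code_hd (code (a :: s)) = a.
Proof. apply unpair1_cpair. Qed.
Lemma code_tl_code s : code_tl (code s) = code (tl s).
Proof. destruct s; [reflexivity|]. apply unpair2_cpair. Qed.

Lemma code_drop_code s p : code_drop (code s) p = code (skipn p s).
Proof.
  revert s; induction p as [|p IH]; intro s; [reflexivity|].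
  unfold code_drop. rewrite Nat.iter_succ_r. fold (code_drop (code_tl (code s)) p).
  rewrite code_tl_code, IH. destruct s; simpl; auto. now destruct p.
Qed.

Lemma code_nth_code s p : code_nth (code s) p = nth p s 0.
Proof.
  unfold code_nth. rewrite code_drop_code.
  revert s; induction p as [|p IH]; intros [|a s]; simpl; auto.
  apply (code_hd_cons a s).
Qed.

Lemma code_has_len_code s M : code_has_len (code s) M = (M <=? length s).
Proof.
  unfold code_has_len. rewrite code_drop_code.
  assert (Hnz : forall l : list nat, nz (code l) = negb (length l =? 0))
    by (intros []; reflexivity).
  rewrite Hnz, length_skipn.
  destruct (Nat.eqb_spec M 0), (Nat.leb_spec M (length s)),
    (Nat.eqb_spec (length s - pred M) 0); simpl; auto; lia.
Qed.

Lemma code_length_le s : length s <= code s.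
Proof. induction s; simpl; [lia|]. rewrite cpair_tri. lia. Qed.

Lemma code_inj s t : code s = code t -> s = t.
Proof.
  revert t; induction s as [|a s IH]; intros [|b t] H; try discriminate; auto.
  injection H as H. f_equal.
  - rewrite <- (unpair1_cpair a (code s)), H. apply unpair1_cpair.
  - apply IH. rewrite <- (unpair2_cpair a (code s)), H. apply unpair2_cpair.
Qed.

Definition r_code_tl (a : rfun) : rfun :=
  r_with (r_unpair2 (r_pred a)) (fun v => code_tl (sem a v)) (fun v => eq_refl).
Lemma drop_rspec v :
  sem (r_rec (r_arg 0) (r_code_tl (r_arg 1)) (r_arg 1)) v = code_drop (nth 0 v 0) (nth 1 v 0).
Proof.
  simpl. induction (nth 1 v 0) as [|n IH]; [reflexivity|].
  simpl. rewrite IH. reflexivity.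
Qed.
Definition r_code_drop (c p : rfun) : rfun :=
  r_with (r_comp (r_rec (r_arg 0) (r_code_tl (r_arg 1)) (r_arg 1)) [c; p])
    (fun v => code_drop (sem c v) (sem p v)) (fun v => drop_rspec _).
Definition r_code_nth (c p : rfun) : rfun :=
  r_with (r_unpair1 (r_pred (r_code_drop c p))) (fun v => code_nth (sem c v) (sem p v))
    (fun v => eq_refl).
Definition r_code_has_len (c M : rfun) : rfun :=
  r_with (r_or (r_eqb M (r_const 0)) (r_code_drop c (r_pred M)))
    (fun v => Nat.b2n (code_has_len (sem c v) (sem M v)))
    (fun v => f_equal Nat.b2n (f_equal2 orb (nz_b2n _) eq_refl)).

Definition xpos (d t : nat) : nat := if t <? d then t else 2 * t + 2 - d.
Definition code_select (d c M : nat) : nat :=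
  code (map (fun t => code_nth c (xpos d t)) (seq 0 M)).
Definition code_take (M c : nat) : nat := code_select M c M.

Lemma xpos_rspec d t v :
  sem (r_if (r_leb (r_S t) d) t (r_sub (r_add (r_mul (r_const 2) t) (r_const 2)) d)) v
  = xpos (sem d v) (sem t v).
Proof.
  sem_simpl. rewrite nz_b2n. unfold xpos.
  destruct (Nat.leb_spec (S (sem t v)) (sem d v)), (Nat.ltb_spec (sem t v) (sem d v)); lia.
Qed.
Definition r_xpos (d t : rfun) : rfun := r_with _ _ (xpos_rspec d t).

(* With arguments [c; M; d], step n conses the entry for position M - 1 - n. *)
Definition r_select_step : rfun :=
  r_S (r_cpair
         (r_code_nth (r_arg 2) (r_xpos (r_arg 4) (r_sub (r_sub (r_arg 3) (r_const 1)) (r_arg 0))))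
         (r_arg 1)).

Lemma select_loop v n :
  let c := nth 0 v 0 in let M := nth 1 v 0 in let d := nth 2 v 0 in
  n <= M ->
  prim_rec (fun _ => 0) (sem r_select_step) n (env6 v)
  = code (map (fun t => code_nth c (xpos d t)) (seq (M - n) n)).
Proof.
  intros c M d. induction n as [|n IH]; intros Hn; [reflexivity|].
  cbn [prim_rec]. rewrite IH by lia. simpl.
  replace (M - S n) with (M - 1 - n) by lia.
  replace (M - n) with (S (M - 1 - n)) by lia. reflexivity.
Qed.

Lemma select_rspec v : sem (r_rec (r_const 0) r_select_step (r_arg 1)) v
  = code_select (nth 2 v 0) (nth 0 v 0) (nth 1 v 0).
Proof.
  cbn [sem r_rec r_arg]. rewrite select_loop, Nat.sub_diag by lia. reflexivity.
Qed.
Definition r_code_select (d c M : rfun) : rfun :=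
  r_with (r_comp (r_rec (r_const 0) r_select_step (r_arg 1)) [c; M; d])
    (fun v => code_select (sem d v) (sem c v) (sem M v)) (fun v => select_rspec _).
Definition r_code_take (M c : rfun) : rfun :=
  r_with (r_code_select M c M) (fun v => code_take (sem M v) (sem c v)) (fun v => eq_refl).

Definition r_exists_below (body bound : rfun) : rfun :=
  r_rec (r_const 0) (r_or (r_arg 1) (r_comp body (r_arg 0 :: map r_arg (seq 2 6)))) bound.

Lemma exists_below_spec body bound v :
  sem (r_exists_below body bound) v
  = Nat.b2n (existsb (fun t => nz (sem body (t :: env6 v))) (seq 0 (sem bound v))).
Proof.
  unfold r_exists_below. cbn [sem r_rec]. induction (sem bound v) as [|n IH]; [reflexivity|].
  rewrite (seq_S n 0), existsb_app. cbn [prim_rec]. rewrite IH. simpl.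
  rewrite nz_b2n, orb_false_r. reflexivity.
Qed.

(** * Lightface Sigma^0 classes *)

Definition btail (x : baire) : baire := fun i => x (S i).

Lemma prefix_S x L : prefix x (S L) = x 0 :: prefix (btail x) L.
Proof. unfold prefix, btail. cbn [seq map]. rewrite <- seq_shift, map_map. reflexivity. Qed.

Lemma length_prefix x L : length (prefix x L) = L.
Proof. unfold prefix. now rewrite length_map, length_seq. Qed.

Lemma code_prefix_ge x L : L <= code (prefix x L).
Proof. rewrite <- (length_prefix x L) at 1. apply code_length_le. Qed.

Lemma code_nth_prefix x L p : p < L -> code_nth (code (prefix x L)) p = x p.
Proof.
  intro Hp. rewrite code_nth_code. unfold prefix.
  rewrite nth_indep with (d' := x 0) by (now rewrite length_map, length_seq).
  now rewrite map_nth, seq_nth.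
Qed.

Lemma code_has_len_prefix x L M : code_has_len (code (prefix x L)) M = (M <=? L).
Proof. now rewrite code_has_len_code, length_prefix. Qed.

Lemma code_select_prefix d x L M : (forall t, t < M -> xpos d t < L) ->
  code_select d (code (prefix x L)) M = code (prefix (fun t => x (xpos d t)) M).
Proof.
  intro H. unfold code_select, prefix. f_equal. apply map_ext_in.
  intros t Ht. apply in_seq in Ht. apply code_nth_prefix, H. lia.
Qed.

Lemma code_take_prefix x L M : M <= L -> code_take M (code (prefix x L)) = code (prefix x M).
Proof.
  intro H. unfold code_take. rewrite code_select_prefix.
  - unfold prefix. f_equal. apply map_ext_in. intros t Ht. apply in_seq in Ht.
    unfold xpos. now destruct (Nat.ltb_spec t M); [|lia].
  - intros t Ht. unfold xpos. destruct (Nat.ltb_spec t M); lia.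
Qed.

Lemma code_tl_prefix x L : code_tl (code (prefix x L)) = code (prefix (btail x) (pred L)).
Proof. destruct L; [reflexivity|]. now rewrite prefix_S, code_tl_code. Qed.

Lemma existsb_seq f n : existsb f (seq 0 n) = true <-> exists t, t < n /\ f t = true.
Proof.
  rewrite existsb_exists.
  split; intros [t [Ht Hf]]; exists t; split; auto; apply in_seq in Ht || apply in_seq; lia.
Qed.

Lemma rfun_computable (u : rfun) (P : nat -> bool) :
  (forall c, sem u [c] = Nat.b2n (P c)) -> computable P.
Proof.
  intro H. exists (prog u). intro k. change (eval (prog u) [k] (Nat.b2n (P k))).
  rewrite <- H. apply prog_computes.
Qed.

Lemma Sig0_rfun A : Sig 0 A ->
  exists u : rfun, forall x, A x <-> exists M, nz (sem u [code (prefix x M)]) = true.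
Proof.
  intros [P [[f Hf] HA]].
  assert (Hu : computes (RComp f [RProj 0]) (fun v => Nat.b2n (P (nth 0 v 0)))).
  { intro v. eapply eComp; [repeat constructor | apply Hf]. }
  exists (Build_rfun _ _ Hu). intro x. rewrite HA. cbn [sem nth]. now setoid_rewrite nz_b2n.
Qed.

Definition r_search_body (R : rfun) : rfun :=
  r_and (r_code_has_len (r_arg 2) (r_arg 0)) (r_comp R [r_arg 1; r_code_take (r_arg 0) (r_arg 2)]).
Definition r_search (R : rfun) : rfun :=
  r_exists_below (r_exists_below (r_search_body R) (r_S (r_arg 1))) (r_S (r_arg 0)).

Lemma search_spec R c : nz (sem (r_search R) [c]) = true <->
  exists i M, i <= c /\ M <= c /\ code_has_len c M = true /\ nz (sem R [i; code_take M c]) = true.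
Proof.
  unfold r_search. rewrite exists_below_spec, nz_b2n, existsb_seq.
  cbn [sem r_S r_with r_comp r_arg map nth].
  split.
  - intros [i [Hi H]]. rewrite exists_below_spec, nz_b2n, existsb_seq in H.
    destruct H as [M [HM H]].
    cbn [r_search_body sem r_with r_and r_comp r_arg r_code_has_len r_code_take
         map nth env6 seq] in H.
    rewrite !nz_b2n, andb_true_iff in H.
    exists i, M. simpl in *. intuition lia.
  - intros [i [M (Hi & HM & Hl & HR)]]. exists i. split; [simpl; lia|].
    rewrite exists_below_spec, nz_b2n, existsb_seq. exists M. split; [simpl; lia|].
    cbn [r_search_body sem r_with r_and r_comp r_arg r_code_has_len r_code_take
         map nth env6 seq].
    rewrite !nz_b2n, Hl, HR. reflexivity.
Qed.

Lemma Sig0_search (A : baire -> Prop) (R : rfun) :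
  (forall x, A x <-> exists i M, nz (sem R [i; code (prefix x M)]) = true) -> Sig 0 A.
Proof.
  intro HA. exists (fun c => nz (sem (r_search R) [c])). split.
  - apply rfun_computable with (u := r_search R). intro c.
    unfold r_search. now rewrite exists_below_spec, nz_b2n.
  - intro x. rewrite HA. split.
    + intros [i [M HR]]. exists (max i M). apply search_spec.
      pose proof (code_prefix_ge x (max i M)).
      exists i, M. rewrite code_has_len_prefix, code_take_prefix by lia.
      repeat split; auto; try lia. apply Nat.leb_le. lia.
    + intros [L HL]. apply search_spec in HL as [i [M (_ & _ & Hl & HR)]].
      rewrite code_has_len_prefix, Nat.leb_le in Hl. rewrite code_take_prefix in HR by lia. eauto.
Qed.

Lemma Sig0_or A B : Sig 0 A -> Sig 0 B -> Sig 0 (fun x => A x \/ B x).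
Proof.
  intros HA HB. destruct (Sig0_rfun A HA) as [u Hu], (Sig0_rfun B HB) as [w Hw].
  apply Sig0_search with (R := r_or (r_comp u [r_arg 1]) (r_comp w [r_arg 1])).
  intro x. rewrite Hu, Hw. sem_simpl. setoid_rewrite nz_b2n. setoid_rewrite orb_true_iff.
  split.
  - intros [[M H]|[M H]]; exists 0, M; auto.
  - intros [_ [M [H|H]]]; eauto.
Qed.

Definition r_on_prefix (u k c : rfun) : rfun :=
  r_and (r_code_has_len c k) (r_comp u [r_code_take k c]).

Lemma on_prefix_spec u k i x L :
  let v := [i; code (prefix x L)] in
  nz (sem (r_on_prefix u k (r_arg 1)) v) = true <->
  sem k v <= L /\ nz (sem u [code (prefix x (sem k v))]) = true.
Proof.
  cbn [r_on_prefix sem r_and r_with r_comp r_arg r_code_has_len r_code_take map nth].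
  rewrite !nz_b2n, andb_true_iff, code_has_len_prefix, Nat.leb_le.
  split; intros [HL H]; split; auto; now rewrite code_take_prefix in *.
Qed.

Lemma Sig0_and A B : Sig 0 A -> Sig 0 B -> Sig 0 (fun x => A x /\ B x).
Proof.
  intros HA HB. destruct (Sig0_rfun A HA) as [u Hu], (Sig0_rfun B HB) as [w Hw].
  apply Sig0_search with (R := r_and (r_on_prefix u (r_unpair1 (r_arg 0)) (r_arg 1))
                                     (r_on_prefix w (r_unpair2 (r_arg 0)) (r_arg 1))).
  intro x. rewrite Hu, Hw. cbn [sem r_and r_with]. setoid_rewrite nz_b2n.
  setoid_rewrite andb_true_iff.
  setoid_rewrite on_prefix_spec. cbn [sem r_with r_unpair1 r_unpair2 r_arg nth].
  split.
  - intros [[M1 H1] [M2 H2]]. exists (cpair M1 M2), (max M1 M2).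
    rewrite unpair1_cpair, unpair2_cpair. repeat split; auto; lia.
  - intros [i [M [[_ H1] [_ H2]]]]. eauto.
Qed.

Lemma Sig0_btail A : Sig 0 A -> Sig 0 (fun y => A (btail y)).
Proof.
  intro HA. destruct (Sig0_rfun A HA) as [u Hu].
  apply Sig0_search with (R := r_comp u [r_code_tl (r_arg 1)]).
  intro y. rewrite Hu. cbn [sem r_comp r_code_tl r_with r_arg map nth].
  setoid_rewrite code_tl_prefix.
  split.
  - intros [M H]. exists 0, (S M). exact H.
  - intros [_ [M H]]. eauto.
Qed.

Lemma Sig0_ex_ncons A : Sig 0 A -> Sig 0 (fun x => exists i, A (ncons i x)).
Proof.
  intro HA. destruct (Sig0_rfun A HA) as [u Hu].
  apply Sig0_search with
    (R := r_or (r_comp u [r_const 0]) (r_comp u [r_S (r_cpair (r_arg 0) (r_arg 1))])).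
  intro x. setoid_rewrite Hu. sem_simpl. cbn [r_cpair sem r_with].
  setoid_rewrite nz_b2n. setoid_rewrite orb_true_iff.
  split.
  - intros [i [[|M] H]]; [exists 0, 0; now left|].
    exists i, M. right. now rewrite prefix_S in H.
  - intros [i [M [H|H]]].
    + exists i, 0. exact H.
    + exists i, (S M). now rewrite prefix_S.
Qed.

Definition Delta0 (A : baire -> Prop) : Prop := Sig 0 A /\ Sig 0 (fun y => ~ A y).

Lemma Sig_ext k (A A' : baire -> Prop) : (forall x, A x <-> A' x) -> Sig k A -> Sig k A'.
Proof.
  destruct k; simpl; intros H [P [HP HA]]; exists P; split; auto; intro x; rewrite <- H; auto.
Qed.

Lemma Delta0_not A : Delta0 A -> Delta0 (fun y => ~ A y).
Proof.
  intros [HA HnA]. split; auto. revert HA. apply Sig_ext. intro x. split; [tauto | apply NNPP].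
Qed.

Lemma Delta0_btail A : Delta0 A -> Delta0 (fun y => A (btail y)).
Proof. intros [HA HnA]. split; [exact (Sig0_btail A HA) | exact (Sig0_btail _ HnA)]. Qed.

Lemma Sig0_decided (b : baire -> bool) (u modulus : rfun) :
  (forall y L, sem modulus [code (prefix y L)] <= L -> sem u [code (prefix y L)] = Nat.b2n (b y)) ->
  (forall y, exists L, sem modulus [code (prefix y L)] <= L) ->
  Sig 0 (fun y => b y = true).
Proof.
  intros Hu Hmod.
  apply Sig0_search with (R := r_and (r_code_has_len (r_arg 1) (r_comp modulus [r_arg 1]))
                                     (r_comp u [r_arg 1])).
  intro y. cbn [sem r_with r_and r_comp r_arg r_code_has_len map nth]. repeat setoid_rewrite nz_b2n.
  setoid_rewrite andb_true_iff. setoid_rewrite code_has_len_prefix. setoid_rewrite Nat.leb_le.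
  split.
  - intro Hb. destruct (Hmod y) as [L HL]. exists 0, L. now rewrite Hu, nz_b2n.
  - intros [_ [L [HL H]]]. now rewrite Hu, nz_b2n in H.
Qed.

Lemma Delta0_decided (A : baire -> Prop) (b : baire -> bool) (u modulus : rfun) :
  (forall y, A y <-> b y = true) ->
  (forall y L, sem modulus [code (prefix y L)] <= L -> sem u [code (prefix y L)] = Nat.b2n (b y)) ->
  (forall y, exists L, sem modulus [code (prefix y L)] <= L) ->
  Delta0 A.
Proof.
  intros HA Hu Hmod. split.
  - apply (Sig_ext 0 (fun y => b y = true)); [firstorder|].
    now apply Sig0_decided with u modulus.
  - apply (Sig_ext 0 (fun y => negb (b y) = true)).
    { intro y. rewrite HA, negb_true_iff. destruct (b y); intuition congruence. }
    apply Sig0_decided with (r_not u) modulus; auto.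
    intros y L HL. sem_simpl. now rewrite Hu, nz_b2n.
Qed.

Lemma Sig_or_and_Delta0 k : forall G W, Delta0 G -> Sig k W ->
  Sig k (fun x => G x \/ W x) /\ Sig k (fun x => G x /\ W x).
Proof.
  induction k as [|k IH]; intros G W HG HW.
  - split; [apply Sig0_or | apply Sig0_and]; auto; apply HG.
  - destruct HW as [B [HB HW]].
    assert (HnG : Delta0 (fun y => ~ G (btail y))) by now apply Delta0_not, Delta0_btail.
    split.
    + exists (fun y => G (btail y) \/ B y). split.
      * apply (Sig_ext k (fun y => ~ G (btail y) /\ ~ B y)); [intro; tauto|].
        now apply IH.
      * intro x. rewrite HW. split.
        -- intros [H|[m H]]; [exists 0 | exists m]; auto.
        -- intros [m [H|H]]; eauto.
    + exists (fun y => G (btail y) /\ B y). split.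
      * apply (Sig_ext k (fun y => ~ G (btail y) \/ ~ B y)).
        { intro y. split; [tauto | apply not_and_or]. }
        now apply IH.
      * intro x. rewrite HW. split.
        -- intros [H [m Hm]]. exists m. split; auto.
        -- intros [m [H Hm]]. eauto.
Qed.

Lemma Sig_ex_or k C W : Delta0 C -> Sig k W ->
  Sig k (fun x => (exists i, C (ncons i x)) \/ W x).
Proof.
  intros HC HW. destruct k as [|k].
  - apply Sig0_or; auto. apply Sig0_ex_ncons, HC.
  - destruct HW as [B [HB HW]]. exists (fun y => C y \/ B y). split.
    + apply (Sig_ext k (fun y => ~ C y /\ ~ B y)); [intro; tauto|].
      apply Sig_or_and_Delta0; auto. now apply Delta0_not.
    + intro x. rewrite HW. split.
      * intros [[i H]|[i H]]; exists i; auto.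
      * intros [i [H|H]]; eauto.
Qed.

Fixpoint univ (k : nat) (a x : baire) : Prop :=
  match k with
  | 0 => exists M, a (code (prefix x M)) <> 0
  | S k => exists m, ~ univ k a (ncons m x)
  end.

(* [xview d v] is a point and [aview d v] an oracle read off v.  Prepending m to
   v and passing from d to S d prepends m to the point and leaves the oracle
   unchanged ([xview_ncons]); for d = 0 the oracle is [evens] of the point
   ([evens_xview]), which is how the diagonal enters. *)
Definition xview (d : nat) (v : baire) : baire := fun t => v (xpos d t).
Definition aview (d : nat) (v : baire) : baire := fun i => v (d + 4 * i + 2).

Lemma xpos_S d t : xpos (S d) (S t) = S (xpos d t).
Proof. unfold xpos. destruct (Nat.ltb_spec t d), (Nat.ltb_spec (S t) (S d)); lia. Qed.

Lemma xpos_le d t : xpos d t <= d + 2 * t + 2.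
Proof. unfold xpos. destruct (Nat.ltb_spec t d); lia. Qed.

Lemma xview_ncons d m v : xview (S d) (ncons m v) = ncons m (xview d v).
Proof.
  apply functional_extensionality. intros [|t]; [reflexivity|].
  unfold xview. now rewrite xpos_S.
Qed.

Lemma code_select_ge d c M : M <= code_select d c M.
Proof.
  unfold code_select. etransitivity; [|apply code_length_le]. now rewrite length_map, length_seq.
Qed.

Definition r_univ_key (d : nat) : rfun := r_code_select (r_const d) (r_arg 1) (r_arg 0).
Definition r_univ_pos (d j : nat) : rfun :=
  r_add (r_add (r_const d) (r_mul (r_const 4) (r_univ_key d))) (r_const j).

Lemma Sig0_univ_view d : Sig 0 (fun v => univ 0 (aview d v) (xview d v)).
Proof.
  apply Sig0_search with
    (R := r_and (r_code_has_len (r_arg 1) (r_univ_pos d 3))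
                (r_code_nth (r_arg 1) (r_univ_pos d 2))).
  intro v. cbn [univ aview sem r_with r_and r_comp r_arg r_code_has_len r_code_nth r_univ_pos
                r_univ_key r_code_select r_add r_mul r_const map nth].
  repeat setoid_rewrite nz_b2n. setoid_rewrite andb_true_iff.
  setoid_rewrite code_has_len_prefix. setoid_rewrite Nat.leb_le. split.
  - intros [M HM]. set (key := code (prefix (xview d v) M)) in HM.
    pose proof (code_prefix_ge (xview d v) M).
    assert (Hkey : code_select d (code (prefix v (d + 4 * key + 3))) M = key).
    { apply code_select_prefix. intros t Ht. pose proof (xpos_le d t). lia. }
    exists M, (d + 4 * key + 3). rewrite Hkey, code_nth_prefix by lia.
    split; [lia|]. unfold nz. now rewrite negb_true_iff, Nat.eqb_neq.
  - intros [M [L [HL Hv]]]. exists M.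
    set (key := code_select d (code (prefix v L)) M) in HL, Hv.
    pose proof (code_select_ge d (code (prefix v L)) M).
    assert (Hkey : key = code (prefix (xview d v) M)).
    { apply code_select_prefix. intros t Ht. pose proof (xpos_le d t). fold key. lia. }
    rewrite code_nth_prefix in Hv by lia. rewrite <- Hkey.
    unfold nz in Hv. now rewrite negb_true_iff, Nat.eqb_neq in Hv.
Qed.

Lemma Sig_univ_view k : forall d, Sig k (fun v => univ k (aview d v) (xview d v)).
Proof.
  induction k as [|k IH]; intro d; [apply Sig0_univ_view|].
  exists (fun z => ~ univ k (aview (S d) z) (xview (S d) z)). split.
  - apply (Sig_ext k (fun z => univ k (aview (S d) z) (xview (S d) z))); [|apply IH].
    intro z. split; [tauto | apply NNPP].
  - intro v. cbn [univ]. split; intros [m Hm]; exists m; rewrite xview_ncons in *; exact Hm.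
Qed.

Definition tail_mismatch (v : baire) : Prop :=
  evens (btail v) (S (v 0)) <> odds (btail v) (S (v 0)).

Definition r_mismatch_pos (j : nat) : rfun :=
  r_add (r_mul (r_const 2) (r_code_nth (r_arg 0) (r_const 0))) (r_const j).

Lemma Delta0_tail_mismatch : Delta0 tail_mismatch.
Proof.
  apply Delta0_decided with (b := fun v => negb (v (2 * v 0 + 3) =? v (2 * v 0 + 4)))
    (u := r_not (r_eqb (r_code_nth (r_arg 0) (r_mismatch_pos 3))
                       (r_code_nth (r_arg 0) (r_mismatch_pos 4))))
    (modulus := r_mismatch_pos 5).
  - intro v. unfold tail_mismatch, evens, odds, btail.
    replace (S (2 * S (v 0))) with (2 * v 0 + 3) by lia.
    replace (S (2 * S (v 0) + 1)) with (2 * v 0 + 4) by lia.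
    now rewrite negb_true_iff, Nat.eqb_neq.
  - intros y L HL. cbn [sem r_with r_not r_eqb r_leb r_and r_sub r_code_nth r_mismatch_pos
                        r_add r_mul r_const r_arg r_comp map nth] in *.
    assert (H0 : code_nth (code (prefix y L)) 0 = y 0).
    { destruct L; [simpl in HL; lia|]. apply code_nth_prefix. lia. }
    rewrite H0 in *. rewrite !code_nth_prefix by lia. now rewrite !nz_b2n.
  - intro y. exists (2 * y 0 + 5). cbn [sem r_with r_mismatch_pos r_add r_mul r_const r_code_nth
                                       r_arg r_comp map nth].
    rewrite code_nth_prefix by lia. lia.
Qed.

Lemma Delta0_heads_parity_differ :
  Delta0 (fun q => Nat.odd (evens q 0) <> Nat.odd (odds q 0)).
Proof.
  apply Delta0_decided with (b := fun q => negb (Bool.eqb (Nat.odd (q 0)) (Nat.odd (q 1))))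
    (u := r_not (r_eqb (r_odd (r_code_nth (r_arg 0) (r_const 0)))
                       (r_odd (r_code_nth (r_arg 0) (r_const 1)))))
    (modulus := r_const 2).
  - intro q. change (evens q 0) with (q 0). change (odds q 0) with (q 1).
    destruct (Nat.odd (q 0)), (Nat.odd (q 1)); simpl; split; congruence.
  - intros y L HL. cbn [sem r_with r_not r_eqb r_leb r_and r_sub r_odd r_code_nth r_const
                        r_arg r_comp map nth] in *.
    rewrite !code_nth_prefix by lia. rewrite !nz_b2n.
    now destruct (Nat.odd (y 0)), (Nat.odd (y 1)).
  - intro y. exists 2. reflexivity.
Qed.

(** * Boldface Sigma^0 classes *)

Fixpoint BSig (k : nat) (A : baire -> Prop) : Prop :=
  match k with
  | 0 => exists P : nat -> bool, forall x, A x <-> exists m, P (code (prefix x m)) = true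
  | S k => exists B : baire -> Prop,
      BSig k (fun z => ~ B z) /\ forall x, A x <-> exists m, B (ncons m x)
  end.

Lemma Sig_BSig k : forall A, Sig k A -> BSig k A.
Proof. induction k; simpl; intros A [P [HP H]]; eauto. Qed.

Lemma BSig_ext k (A A' : baire -> Prop) : (forall x, A x <-> A' x) -> BSig k A -> BSig k A'.
Proof.
  destruct k; simpl; intros H [P HP]; exists P;
    [|destruct HP as [HP1 HP2]; split; auto]; intro x; rewrite <- H; auto.
Qed.

Lemma BSig_univ k : forall A, BSig k A -> exists a, forall x, A x <-> univ k a x.
Proof.
  induction k as [|k IH]; intros A HA.
  - destruct HA as [P HP]. exists (fun c => Nat.b2n (P c)). intro x. rewrite HP.
    split; intros [m Hm]; exists m; destruct (P (code (prefix x m))); simpl in *; congruence.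
  - destruct HA as [B [HB HA]]. destruct (IH _ HB) as [a Ha]. exists a. intro x. rewrite HA.
    split; intros [m Hm]; exists m; rewrite <- Ha in *; [tauto | now apply NNPP].
Qed.

Definition diag (K : nat) (x : baire) : Prop := ~ univ K (evens x) x.

Lemma diag_not_BSig K : ~ BSig K (diag K).
Proof.
  intro H. destruct (BSig_univ K _ H) as [a Ha].
  set (x := fun p => a (Nat.div2 p)).
  assert (Hx : evens x = a).
  { apply functional_extensionality. intro i. unfold evens, x. now rewrite Nat.div2_double. }
  specialize (Ha x). unfold diag in Ha. rewrite Hx in Ha. tauto.
Qed.

Definition agree (x y : baire) (L : nat) : Prop := forall i, i < L -> x i = y i.
Definition continuous (f : baire -> baire) : Prop :=
  forall x M, exists L, forall y, agree x y L -> agree (f x) (f y) M.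

Lemma prefix_eq_agree x y L : prefix x L = prefix y L <-> agree x y L.
Proof.
  split.
  - intros H i Hi. apply (f_equal (fun s => code_nth (code s) i)) in H.
    now rewrite !code_nth_prefix in H.
  - intro H. unfold prefix. apply map_ext_in. intros i Hi. apply in_seq in Hi. apply H. lia.
Qed.

Lemma continuous_ncons_head (h : nat -> nat) (F : nat -> baire -> baire) :
  (forall r, continuous (F r)) -> continuous (fun y => ncons (h (y 0)) (F (y 0) (btail y))).
Proof.
  intros HF y [|M]; [exists 0; intros y' _ i Hi; lia|].
  destruct (HF (y 0) (btail y) M) as [L HL]. exists (S L). intros y' Hy [|i] Hi.
  - simpl. now rewrite (Hy 0) by lia.
  - simpl. rewrite <- (Hy 0) by lia. apply HL; [|lia]. intros j Hj. apply Hy. lia.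
Qed.

Definition decide (P : Prop) : bool := if excluded_middle_informative P then true else false.
Lemma decide_spec P : decide P = true <-> P.
Proof. unfold decide. destruct (excluded_middle_informative P); intuition congruence. Qed.

Lemma BSig_preimage k : forall A f, BSig k A -> continuous f -> BSig k (fun x => A (f x)).
Proof.
  induction k as [|k IH]; intros A f HA Hf.
  - destruct HA as [P HP].
    (* Accept a prefix once all of its extensions are mapped into one accepted prefix. *)
    exists (fun c => decide (exists s M, code s = c /\
                       forall y, prefix y (length s) = s -> P (code (prefix (f y) M)) = true)).
    intro x. rewrite HP. setoid_rewrite decide_spec. split.
    + intros [M HM]. destruct (Hf x M) as [L HL]. exists L, (prefix x L), M.
      split; auto. intros y Hy. rewrite length_prefix in Hy.
      symmetry in Hy. apply prefix_eq_agree, HL, prefix_eq_agree in Hy. now rewrite <- Hy.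
    + intros [L [s [M [Hs H]]]]. apply code_inj in Hs. subst s.
      exists M. apply H. now rewrite length_prefix.
  - destruct HA as [B [HB HA]].
    exists (fun y => B (ncons (y 0) (f (btail y)))). split.
    + apply (IH (fun z => ~ B z) (fun y => ncons (y 0) (f (btail y))) HB).
      now apply (continuous_ncons_head (fun m => m) (fun _ => f)).
    + intro x. apply HA.
Qed.

Lemma BSig_ex_preimage k A (F : nat -> baire -> baire) : BSig k A ->
  (forall r, continuous (F r)) -> BSig k (fun x => exists r, A (F r x)).
Proof.
  intros HA HF. destruct k as [|k].
  - exists (fun c => decide (exists r (Q : nat -> bool),
              (forall x, A (F r x) <-> exists m, Q (code (prefix x m)) = true) /\ Q c = true)).
    intro x. setoid_rewrite decide_spec. split.
    + intros [r Hr]. destruct (BSig_preimage 0 A (F r) HA (HF r)) as [Q HQ].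
      destruct (proj1 (HQ x) Hr) as [m Hm]. eauto 6.
    + intros [m [r [Q [HQ Hm]]]]. exists r. apply HQ. eauto.
  - destruct HA as [B [HB HA]].
    set (g := fun y => ncons (unpair2 (y 0)) (F (unpair1 (y 0)) (btail y))).
    exists (fun y => B (g y)). split.
    + apply (BSig_preimage k (fun z => ~ B z) g HB).
      now apply (continuous_ncons_head unpair2 (fun r => F (unpair1 r))).
    + intro x. setoid_rewrite HA. unfold g. cbn [ncons]. split.
      * intros [r [m Hm]]. exists (cpair r m). now rewrite unpair1_cpair, unpair2_cpair.
      * intros [s Hs]. eauto.
Qed.

(** * The relation *)

Definition tail_parity_rel (K : nat) (z w : baire) : Prop :=
  btail z = btail w /\ (diag K (btail z) \/ Nat.odd (z 0) = Nat.odd (w 0)).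

Lemma tail_parity_rel_equiv K : equivalence baire (tail_parity_rel K).
Proof.
  split.
  - intro x. split; auto.
  - intros x y z [Hxy Dxy] [Hyz Dyz]. split; [congruence|].
    rewrite <- Hxy in Dyz. intuition congruence.
  - intros x y [Hxy D]. split; [congruence|]. rewrite <- Hxy. intuition.
Qed.

Lemma btail_evens q : btail (evens q) = xview 0 q.
Proof.
  apply functional_extensionality. intro t. unfold btail, evens, xview, xpos. simpl. f_equal. lia.
Qed.

Lemma evens_xview q : evens (xview 0 q) = aview 0 q.
Proof.
  apply functional_extensionality. intro i. unfold evens, xview, aview, xpos. simpl. f_equal. lia.
Qed.

Lemma tail_parity_rel_Pi0 K : Pi0_rel (S K) (tail_parity_rel K).
Proof.
  apply (Sig_ext K (fun q => (exists i, tail_mismatch (ncons i q)) \/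
           (Nat.odd (evens q 0) <> Nat.odd (odds q 0) /\ univ K (aview 0 q) (xview 0 q)))).
  - intro q. unfold tail_parity_rel, diag. rewrite btail_evens at 2 3. rewrite evens_xview.
    assert (Htails : btail (evens q) = btail (odds q) <-> ~ exists i, tail_mismatch (ncons i q)).
    { split.
      - intros E [i Hi]. exact (Hi (equal_f E i)).
      - intro H. apply functional_extensionality. intro i.
        apply NNPP. intro Hi. apply H. now exists i. }
    rewrite Htails.
    destruct (classic (exists i, tail_mismatch (ncons i q))),
      (classic (univ K (aview 0 q) (xview 0 q))); tauto.
  - apply Sig_ex_or; [apply Delta0_tail_mismatch|].
    apply Sig_or_and_Delta0; [apply Delta0_heads_parity_differ | apply Sig_univ_view].
Qed.

Lemma ncons_eta y : ncons (y 0) (btail y) = y.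
Proof. apply functional_extensionality. now intros [|i]. Qed.

Lemma tail_parity_rel_classes K x : countably_infinite (fun y => tail_parity_rel K x y).
Proof.
  destruct (classic (diag K (btail x))) as [D|D].
  - exists (fun k => ncons k (btail x)). split.
    + intros i j H. exact (f_equal (fun f => f 0) H).
    + intro y. split.
      * intros [Hxy _]. exists (y 0). now rewrite Hxy, ncons_eta.
      * intros [k <-]. split; auto.
  - set (b := Nat.b2n (Nat.odd (x 0))).
    assert (Hb : forall k, Nat.odd (2 * k + b) = Nat.odd (x 0)).
    { intro k. rewrite Nat.add_comm, Nat.odd_add_mul_2. unfold b. now destruct (Nat.odd (x 0)). }
    exists (fun k => ncons (2 * k + b) (btail x)). split.
    + intros i j H. apply (f_equal (fun f => f 0)) in H. simpl in H. lia.
    + intro y. split.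
      * intros [Hxy [H|H]]; [contradiction|]. exists (Nat.div2 (y 0)).
        transitivity (ncons (y 0) (btail y)); [|apply ncons_eta].
        rewrite <- Hxy. f_equal. unfold b. rewrite H. symmetry. apply Nat.div2_odd.
      * intros [k <-]. split; [reflexivity|]. right. cbn [ncons]. now rewrite Hb.
Qed.

Lemma rt_crossing {A} (R : relation A) (P : A -> Prop) a b :
  clos_refl_trans A R a b -> P a -> ~ P b -> exists u w, R u w /\ P u /\ ~ P w.
Proof.
  induction 1 as [a b Hab | a | a b c _ IHab _ IHbc]; intros Ha Hb.
  - eauto.
  - contradiction.
  - destruct (classic (P b)); auto.
Qed.

Definition interleave (z w : baire) : baire :=
  fun n => if Nat.even n then z (Nat.div2 n) else w (Nat.div2 n).

Lemma evens_interleave z w : evens (interleave z w) = z.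
Proof.
  apply functional_extensionality. intro i. unfold evens, interleave.
  now rewrite Nat.even_mul, Nat.div2_double.
Qed.

Lemma odds_interleave z w : odds (interleave z w) = w.
Proof.
  apply functional_extensionality. intro i. unfold odds, interleave.
  rewrite Nat.add_1_r, Nat.even_succ, Nat.odd_mul, Nat.div2_succ_double. reflexivity.
Qed.

Definition pair_point (r : nat) (x : baire) : baire :=
  interleave (ncons (2 * unpair1 r) x) (ncons (2 * unpair2 r + 1) x).

Lemma pair_point_continuous r : continuous (pair_point r).
Proof.
  intros x M. exists M. intros y Hxy i Hi. unfold pair_point, interleave.
  assert (Hdiv : Nat.div2 i <= i) by (pose proof (Nat.div2_odd i); lia).
  destruct (Nat.even i), (Nat.div2 i) as [|j] eqn:E; simpl; auto; apply Hxy; lia.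
Qed.

(* A path from [ncons 0 x] to [ncons 1 x] stays over the tail [x] and must
   change parity somewhere. *)
Lemma diag_iff_edge K (G : baire -> baire -> Prop) :
  (forall z w, tail_parity_rel K z w <-> clos_refl_trans baire G z w) ->
  forall x, diag K x <-> exists r, G (evens (pair_point r x)) (odds (pair_point r x)).
Proof.
  intros HG x. unfold pair_point. setoid_rewrite evens_interleave. setoid_rewrite odds_interleave.
  assert (Hedge : forall z w, G z w -> tail_parity_rel K z w) by (intros; apply HG, rt_step; auto).
  split.
  - intro D. assert (E : tail_parity_rel K (ncons 0 x) (ncons 1 x)) by (split; auto).
    apply HG, (rt_crossing _ (fun u => btail u = x /\ Nat.odd (u 0) = false)) in E
      as [u [w [Huw [[Hu Hu0] Hw]]]]; [|split; reflexivity|intros [_ H]; discriminate].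
    destruct (Hedge u w Huw) as [Htl _].
    assert (Hw0 : Nat.odd (w 0) = true).
    { destruct (Nat.odd (w 0)); [reflexivity|]. exfalso. apply Hw. split; congruence. }
    exists (cpair (Nat.div2 (u 0)) (Nat.div2 (w 0))).
    rewrite unpair1_cpair, unpair2_cpair.
    rewrite <- (ncons_eta u), <- (ncons_eta w) in Huw. rewrite <- Htl, Hu in Huw.
    rewrite (Nat.div2_odd (u 0)), (Nat.div2_odd (w 0)), Hu0, Hw0, Nat.add_0_r in Huw. exact Huw.
  - intros [r Hr]. destruct (Hedge _ _ Hr) as [_ [D|H]]; [exact D|].
    cbn [ncons] in H. now rewrite Nat.odd_even, Nat.odd_odd in H.
Qed.

Lemma tail_parity_rel_not_graphable K : ~ Sigma0_graphable (S K) (tail_parity_rel K).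
Proof.
  intros [G [HG [_ HE]]]. apply (diag_not_BSig K).
  apply (BSig_ext K (fun x => exists r, (fun q => G (evens q) (odds q)) (pair_point r x))).
  - intro x. symmetry. now apply diag_iff_edge.
  - apply (BSig_ex_preimage K (fun q => G (evens q) (odds q)));
      [apply Sig_BSig, HG | apply pair_point_continuous].
Qed.

Theorem proposition3p2 (n : nat) (hn : 1 <= n) :
  exists E : baire -> baire -> Prop,
    equivalence baire E /\
    Pi0_rel n E /\
    (forall x, countably_infinite (fun y => E x y)) /\
    ~ Sigma0_graphable n E.
Proof.
  destruct n as [|K]; [lia|].
  exists (tail_parity_rel K).
  split; [apply tail_parity_rel_equiv|].
  split; [apply tail_parity_rel_Pi0|].
  split; [apply tail_parity_rel_classes | apply tail_parity_rel_not_graphable].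
Qed.
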